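(* Assume the standing assumptions (i)–(viii) below and let $\delta\in(0,1)$, $T\ge1$. Consider RFedAGS with decaying step sizes $\alpha_{t,k}=\bar\alpha_t$ and batch sizes $B_{t,k}=\bar B_t\in[B_{\mathrm{low}},B_{\mathrm{up}}]$, and let $\tilde K\ge2$ be an integer such that $2-\delta\ge L\bar\alpha_t$ and, for every $K\in\{2,\dots,\tilde K\}$ and every $t$, $1\ge L^2\bar\alpha_t^2M(K+1)(K-2)+\bar\alpha_tLK$ and $1-\delta\ge2L^2\bar\alpha_t^2M$. For $K\in\{1,\dots,\tilde K\}$ define \[ Q_2(K)=\frac{2(F(\tilde x_1)-F(x^* ))}{(K-1+\delta)\sum_{t=1}^T\bar\alpha_t}+\sum_{t=1}^T\frac{\bar\alpha_t^2K\sigma^2L}{(K-1+\delta)\bar B_t\sum_{t=1}^T\bar\alpha_t}\Big(\frac{\bar\alpha_t(2K-1)(K-1)ML}{3}+\frac KS\Big), \] the upper bound on $\mathbb{E}\big[\sum_{t=1}^T\frac{\bar\alpha_t}{\sum_{t=1}^T\bar\alpha_t}\|\mathrm{grad}F(\tilde x_t)\|^2\big]$ obtained when RFedAGS is run with $K$ local steps, and call $K^*\in\arg\min_{K\in\{1,\dots,\tilde K\}}Q_2(K)$ an optimal choice of $K$. If \[ F(\tilde x_1)-F(x^* )>\delta\sigma^2L\sum_{t=1}^T\frac{\bar\alpha_t^2}{\bar B_t}\Big(\bar\alpha_tML+\frac2S\Big), \] then every optimal choice satisfies $K^*>1$.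
   Context: $\mathcal{M}$ is a Riemannian manifold with inner product $\langle\cdot,\cdot\rangle_x$ and norm $\|\cdot\|$ on each tangent space $\mathrm{T}_x\mathcal{M}$; $\mathrm{grad}$ is the Riemannian gradient, $0_x$ the zero of $\mathrm{T}_x\mathcal{M}$. $F(x)=\mathbb{E}_{\xi\sim\mathcal{D}}[f(x;\xi)]$ for a data distribution $\mathcal{D}$; $x^*\in\arg\min_{x\in\mathcal M}F(x)$. $\mathrm{R}$ is a smooth retraction ($\mathrm{R}_x(0_x)=x$, $\mathrm{D}\mathrm{R}_x(0_x)=\mathrm{id}$). A set $\mathcal{W}\subseteq\mathcal{M}$ is totally retractive if there is $r>0$ such that for every $y\in\mathcal{W}$, $\mathcal{W}\subseteq\mathrm{R}_y(\mathbb{B}(0_y,r))$ and $\mathrm{R}_y$ is a diffeomorphism on $\mathbb{B}(0_y,r)$; then $\mathrm{R}_x^{-1}(y)$ is defined for $x,y\in\mathcal{W}$. A vector transport $\Gamma$ associated with $\mathrm{R}$ gives, for $x,y\in\mathcal{W}$, a linear map $\Gamma_x^y:\mathrm{T}_x\mathcal{M}\to\mathrm{T}_y\mathcal{M}$; it is isometric if it preserves inner products. Algorithm RFedAGS (with $S$ agents, $K$ local steps, step sizes $\alpha_{t,k}>0$, batch sizes $B_{t,k}\in\mathbb{N}$, initial point $\tilde x_1$): for $t=1,2,\dots$, for each agent $j$ set $x_{t,0}^j=\tilde x_t$, $\zeta_{t,0}^j=0_{\tilde x_t}$; for $k=1,\dots,K$ agent $j$ draws a mini-batch $\mathcal{B}^j_{t,k-1}$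 of $B_{t,k-1}$ i.i.d. samples $\xi^j_{t,k-1,s}\sim\mathcal{D}$ (independent of all other samples), sets $\eta^j_{k-1}=-\frac{\alpha_{t,k-1}}{B_{t,k-1}}\sum_{s\in\mathcal{B}^j_{t,k-1}}\mathrm{grad}f(x^j_{t,k-1};\xi^j_{t,k-1,s})$, $x^j_{t,k}=\mathrm{R}_{x^j_{t,k-1}}(\eta^j_{k-1})$, $\zeta^j_{t,k}=\zeta^j_{t,k-1}+\Gamma_{x^j_{t,k-1}}^{\tilde x_t}(\eta^j_{k-1})$; then $\tilde x_{t+1}=\mathrm{R}_{\tilde x_t}\big(\frac1S\sum_{j}\zeta^j_{t,K}\big)$. $\mathbb{E}$ denotes total expectation. Standing assumptions: (i) $x^*$, all $\tilde x_t$ and all $x^j_{t,k}$ lie in a compact connected set $\mathcal{W}$ totally retractive w.r.t. $\mathrm{R}$; (ii) each $f(\cdot;\xi)$ is continuously differentiable; (iii) $\Gamma$ is isometric; (iv) $F$ is $L$-retraction-smooth on $\mathcal{W}$ ($F(\mathrm{R}_x(\eta))\le F(x)+\langle\mathrm{grad}F(x),\eta\rangle+\frac L2\|\eta\|^2$ for $x\in\mathcal{W}$, $\mathrm{R}_x(\eta)\in\mathcal{W}$) and $L$-Lipschitz continuously differentiable w.r.t. $\Gamma$ on $\mathcal{W}$ ($\|\Gamma_x^y(\mathrm{grad}F(x))-\mathrm{grad}F(y)\|\le L\|\eta\|$ whenever $x\in\mathcal{W}$, $y=\mathrm{R}_x(\eta)\in\mathcal{W}$); (v) $\alpha_{t,k}\le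 A$ for all $t,k$; (vi) $\mathbb{E}_\xi[\mathrm{grad}f(x;\xi)]=\mathrm{grad}F(x)$; (vii) there is $\sigma>0$ with $\mathbb{E}\|\frac1B\sum_s\mathrm{grad}f(x;\xi_s)-\mathrm{grad}F(x)\|^2\le\sigma^2/B$ for every $x\in\mathcal{W}$ and every mini-batch of $B$ i.i.d. samples; (viii) there is $C_1>0$ with $\|\mathrm{grad}f(x;\xi)\|\le C_1$ for all $x\in\mathcal{W}$ and all $\xi$. Constant $M$: with $P_{x,y}=\mathrm{R}_y^{-1}\circ\mathrm{R}_x$ for $x,y\in\mathcal{W}$, $C_2,C_3>0$ are constants (uniform bounds on the first and second derivatives of $P_{x,y}$ on its compact domain) such that for all $x,y\in\mathcal{W}$ and $\eta\in\mathrm{T}_x\mathcal{M}$ with $\mathrm{R}_x(\eta)\in\mathcal{W}$: $\|\mathrm{D}P_{x,y}(0_x)\|_{\mathrm{op}}\le C_2$ and $\|P_{x,y}(\eta)-P_{x,y}(0_x)-\mathrm{D}P_{x,y}(0_x)[\eta]\|\le C_3\|\eta\|^2$. Then $M=C_2^2+A^2C_1^2C_3^2$. *)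

From HB Require Import structures.
From mathcomp Require Import all_boot all_order all_algebra.
From mathcomp Require Import reals.
Set Implicit Arguments. Unset Strict Implicit. Unset Printing Implicit Defensive.
Import Order.TTheory GRing.Theory Num.Theory.
Local Open Scope ring_scope.

Definition Mconst (R : realType) (A C1 C2 C3 : R) : R :=
  C2 ^+ 2 + A ^+ 2 * C1 ^+ 2 * C3 ^+ 2.

(* Q_2(K): the bound on E[ sum_t alpha_t / (sum alpha) ||grad F(x_t)||^2 ]
   for RFedAGS with K local steps; D stands for F(x~_1) - F(x^* ).
   Time index t ranges over 1..T. *)
Definition Q2 (R : realType) (D L M sigma delta : R) (S T : nat)
    (alpha : nat -> R) (B : nat -> nat) (K : nat) : R :=
  let sa := \sum_(1 <= t < T.+1) alpha t in
  2 * D / ((K%:R - 1 + delta) * sa)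
  + \sum_(1 <= t < T.+1)
      (alpha t ^+ 2 * K%:R * sigma ^+ 2 * L
         / ((K%:R - 1 + delta) * (B t)%:R * sa)
       * (alpha t * (2 * K%:R - 1) * (K%:R - 1) * M * L / 3 + K%:R / S%:R)).

From HB Require Import structures.
From mathcomp Require Import all_boot all_order all_algebra.
From mathcomp Require Import reals.
From mathcomp Require Import ring lra.
Import Order.TTheory GRing.Theory Num.Theory.
Local Open Scope ring_scope.

(* Q_2(K) is (2 D + N(K)) / ((K - 1 + delta) sum_t alpha_t) with a
   nonnegative noise term N(K). Since N(2) = 2 sigma^2 L sum_t alpha_t^2 / B_t
   (alpha_t M L + 2/S), the gap hypothesis reads delta N(2) < 2 D, and this
   forces Q_2(2) < Q_2(1); hence K = 1 is never a minimiser. The step-size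
   conditions only make Q_2 a valid bound in the paper; the comparison of
   Q_2(1) and Q_2(2) does not need them. *)

Lemma ltr_shifted_ratio (R : realFieldType) (E n1 n2 d s : R) :
  0 < d -> 0 < s -> 0 <= n1 -> d * n2 < E ->
  (E + n2) / ((1 + d) * s) < (E + n1) / (d * s).
Proof.
move=> d_gt0 s_gt0 n1_ge0 dn2_lt.
have d1_gt0 : 0 < 1 + d by lra.
rewrite ltr_pdivrMr ?mulr_gt0 // mulrAC ltr_pdivlMr ?mulr_gt0 //.
have : 0 < s * ((E + n1) * (1 + d) - (E + n2) * d) by rewrite mulr_gt0 //; nra.
lra.
Qed.

Section Q2_noise.
Variables (R : realType) (D L M sigma delta : R) (S T : nat).
Variables (alpha : nat -> R) (B : nat -> nat).

Definition Q2_noise (K : nat) : R :=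
  \sum_(1 <= t < T.+1)
    (alpha t ^+ 2 * K%:R * sigma ^+ 2 * L / (B t)%:R
     * (alpha t * (2 * K%:R - 1) * (K%:R - 1) * M * L / 3 + K%:R / S%:R)).

Lemma Q2E (K : nat) :
  Q2 D L M sigma delta S T alpha B K
  = (2 * D + Q2_noise K) / ((K%:R - 1 + delta) * \sum_(1 <= t < T.+1) alpha t).
Proof.
rewrite /Q2 /Q2_noise [RHS]mulrDl mulr_suml; congr (_ + _).
by apply: eq_bigr => t _; rewrite !invfM; ring.
Qed.

Lemma Q2_noise_ge0 (K : nat) :
  (0 < K)%N -> 0 <= L -> 0 <= M -> (forall t, (1 <= t)%N -> 0 <= alpha t) ->
  0 <= Q2_noise K.
Proof.
move=> K_gt0 L_ge0 M_ge0 alpha_ge0.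
have K1_ge0 : 0 <= K%:R - 1 :> R by rewrite subr_ge0 ler1n.
have K2_ge0 : 0 <= 2 * K%:R - 1 :> R by rewrite subr_ge0 -natrM ler1n muln_gt0.
rewrite /Q2_noise big_nat_cond sumr_ge0 // => t /andP[/andP[t_ge1 _] _].
have a_ge0 := alpha_ge0 t t_ge1.
by rewrite mulr_ge0 ?addr_ge0 ?divr_ge0 ?ler0n //; rewrite ?(sqr_ge0, mulr_ge0).
Qed.

Lemma Q2_noise2 :
  Q2_noise 2 = 2 * (sigma ^+ 2 * L *
    \sum_(1 <= t < T.+1) (alpha t ^+ 2 / (B t)%:R * (alpha t * M * L + 2 / S%:R))).
Proof.
rewrite /Q2_noise !mulr_sumr; apply: eq_bigr => t _.
by move: (B t)%:R^-1 (S%:R^-1) => u v; field.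
Qed.

Lemma Q2_2_lt_1 :
  0 < delta -> 0 <= L -> 0 <= M -> (forall t, (1 <= t)%N -> 0 <= alpha t) ->
  0 < \sum_(1 <= t < T.+1) alpha t ->
  delta * sigma ^+ 2 * L *
    \sum_(1 <= t < T.+1) (alpha t ^+ 2 / (B t)%:R * (alpha t * M * L + 2 / S%:R))
  < D ->
  Q2 D L M sigma delta S T alpha B 2 < Q2 D L M sigma delta S T alpha B 1.
Proof.
move=> delta_gt0 L_ge0 M_ge0 alpha_ge0 sa_gt0 gap.
rewrite !Q2E (_ : 2%:R - 1 = 1 :> R) ?subrr ?add0r; last by lra.
apply: ltr_shifted_ratio => //; first exact: Q2_noise_ge0.
by rewrite Q2_noise2; lra.
Qed.

End Q2_noise.

Theorem theorem7 (R : realType) (X : Type) (F : X -> R) (x1 xstar : X)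
    (L sigma A C1 C2 C3 delta : R) (S T Blow Bup Ktilde : nat)
    (alpha : nat -> R) (B : nat -> nat)
    (* x^* minimizes F *)
    (Hxstar : forall x, F xstar <= F x)
    (HL : 0 < L) (Hsigma : 0 < sigma) (HA : 0 < A)
    (HC1 : 0 < C1) (HC2 : 0 < C2) (HC3 : 0 < C3)
    (Hdelta : 0 < delta < 1) (HT : (1 <= T)%N) (HS : (1 <= S)%N)
    (Hblow : (1 <= Blow)%N)
    (Halpha : forall t, (1 <= t)%N -> 0 < alpha t <= A)
    (HB : forall t, (1 <= t)%N -> (Blow <= B t <= Bup)%N)
    (HK : (2 <= Ktilde)%N)
    (Hstep1 : forall t, (1 <= t)%N -> L * alpha t <= 2 - delta)
    (Hstep2 : forall t K, (1 <= t)%N -> (2 <= K <= Ktilde)%N ->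
       L ^+ 2 * alpha t ^+ 2 * Mconst A C1 C2 C3 * (K%:R + 1) * (K%:R - 2)
         + alpha t * L * K%:R <= 1)
    (Hstep3 : forall t, (1 <= t)%N ->
       2 * L ^+ 2 * alpha t ^+ 2 * Mconst A C1 C2 C3 <= 1 - delta)
    (Hgap : F x1 - F xstar >
       delta * sigma ^+ 2 * L *
       \sum_(1 <= t < T.+1) (alpha t ^+ 2 / (B t)%:R
                  * (alpha t * Mconst A C1 C2 C3 * L + 2 / S%:R)))
    (Kstar : nat) (HKs : (1 <= Kstar <= Ktilde)%N)
    (Hmin : forall K, (1 <= K <= Ktilde)%N ->
       Q2 (F x1 - F xstar) L (Mconst A C1 C2 C3) sigma delta S T alpha B Kstar
       <= Q2 (F x1 - F xstar) L (Mconst A C1 C2 C3) sigma delta S T alpha B K) :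
  (1 < Kstar)%N.
Proof.
case/andP: HKs => Kstar_ge1 _.
rewrite ltn_neqAle Kstar_ge1 andbT; apply/eqP => Kstar1; subst Kstar.
have alpha_ge0 t : (1 <= t)%N -> 0 <= alpha t.
  by move=> /Halpha /andP[/ltW].
have sa_gt0 : 0 < \sum_(1 <= t < T.+1) alpha t.
  rewrite big_nat_recl // ltr_pwDl ?sumr_ge0 //; first by case/andP: (Halpha 1%N isT).
  by move=> t _; exact: alpha_ge0.
have M_ge0 : 0 <= Mconst A C1 C2 C3 by rewrite /Mconst -!exprMn addr_ge0 ?sqr_ge0.
have Q2_lt : Q2 (F x1 - F xstar) L (Mconst A C1 C2 C3) sigma delta S T alpha B 2
             < Q2 (F x1 - F xstar) L (Mconst A C1 C2 C3) sigma delta S T alpha B 1.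
  by apply: Q2_2_lt_1 => //; [case/andP: Hdelta | exact: ltW].
by move: (Hmin 2%N); rewrite HK leNgt Q2_lt => /(_ isT).
Qed.
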